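(* If $t\le n-2$, then the action protocol $P^{\mathit{basic}}$ implements the knowledge-based program $\mathbf P^0$ in the EBA context $\gamma_{\mathit{basic},n,t}$, where $P^{\mathit{basic}}_i$ is: if $\mathit{decided}_i\ne\bot$ then $\mathtt{noop}$; else if $\mathit{init}_i=0$ or $\mathit{rd}_i=0$ then $\mathtt{decide}_i(0)$; else if $\#1_i>n-\mathit{time}_i$ or $\mathit{rd}_i=1$ then $\mathtt{decide}_i(1)$; else $\mathtt{noop}$.
   Context: Agents and runs. There are $n$ agents $\mathit{Agt}=\{1,\ldots,n\}$; time is $m\in\mathbb N$, and round $m+1$ is the step from time $m$ to time $m+1$. An information-exchange protocol $\mathcal E$ specifies for each agent $i$: a set $L_i$ of local states, a set $I_i\subseteq L_i$ of initial states, a set $A_i$ of actions, a set $M_i$ of messages, a function giving for $s\in L_i$, $a\in A_i$ and each agent $j$ the message $\mu_{ij}(s,a)\in M_i\cup\{\bot\}$ that $i$ sends to $j$ ($\bot$ means no message), and a transition function $\delta_i:L_i\times A_i\times\prod_j(M_j\cup\{\bot\})\to L_i$. A failure pattern is a pair $(\mathcal N,F)$ with $\mathcal N\subseteq\mathit{Agt}$ (the nonfaulty agents) and $F:\mathbb N\times\mathit{Agt}\times\mathit{Agt}\to\{0,1\}$, where $F(m,i,j)=0$ means the message from $i$ to $j$ in round $m+1$ is lost. The sending-omissions failure model $SO(t)$ ($t<n$) is the set of failure patterns with $|\mathit{Agt}\setminus\mathcal N|\le t$ such that $F(m,i,j)=0$ implies $i\notin\mathcal N$. An action protocol $P$ gives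 each agent $i$ a map $P_i:L_i\to A_i$. Given $\mathcal E$, a failure model $\mathcal F$ and $P$, each initial global state (a failure pattern $(\mathcal N,F)\in\mathcal F$ and an $s_i\in I_i$ for each $i$) determines a unique run $r$: if $r_i(k)$ is $i$'s local state at time $k$, then $i$ performs $a_i=P_i(r_i(k))$, agent $j$ receives $m'_{ij}=\mu_{ij}(r_i(k),a_i)$ if $F(k,i,j)=1$ and $\bot$ otherwise, and $r_i(k+1)=\delta_i(r_i(k),a_i,(m'_{1i},\ldots,m'_{ni}))$; the failure pattern is fixed in the run and $\mathcal N(r)$ denotes its nonfaulty set. $\mathcal R_{\mathcal E,\mathcal F,P}$ is the set of all such runs. An interpreted system $\mathcal I=(\mathcal R,\pi)$ is a set of runs with an interpretation $\pi$ of primitive propositions at points $(r,m)$. $\mathcal I,(r,m)\models K_i\varphi$ iff $\varphi$ holds at all points $(r',m')$ of $\mathcal I$ with $r'_i(m')=r_i(m)$; $\bigcirc\varphi$ holds at $(r,m)$ iff $\varphi$ holds at $(r,m+1)$; $\ominus\varphi$ holds at $(r,m)$ iff $m>0$ and $\varphi$ holds at $(r,m-1)$. EBA contexts. An EBA context is a tuple $\gamma=(\mathcal E,\mathcal F,\pi)$ such that: each $A_i=\{\mathtt{decide}_i(0),\mathtt{decide}_i(1),\mathtt{noop}\}$; local states have the form $\langle \mathit{time}_i,\mathit{init}_i,\mathit{decided}_i,\mathit{rd}_i,\ldots\rangle$ with $\mathit{time}_i\in\mathbb N$, $\mathit{init}_i\in\{0,1\}$ (initial preference), $\mathit{decided}_i,\mathit{rd}_i\in\{0,1,\bot\}$;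 initial states have the form $\langle 0,\mathit{init}_i,\bot,\bot,\ldots\rangle$; there are pairwise disjoint sets $M^0,M^1,M^2$ with $\bot\notin M^0\cup M^1$ such that an agent performing $\mathtt{decide}_i(0)$ (resp. $\mathtt{decide}_i(1)$, resp. $\mathtt{noop}$) sends every agent a message in $M^0$ (resp. $M^1$, resp. $M^2$); $\delta_i$ increments $\mathit{time}_i$, sets $\mathit{decided}_i:=v$ if the action is $\mathtt{decide}_i(v)$ (otherwise leaves it unchanged), and sets $\mathit{rd}_i$ to $0$ (resp. $1$) if in that round $i$ received a message from an agent performing $\mathtt{decide}(0)$ (resp. $\mathtt{decide}(1)$), and to $\bot$ otherwise; $\pi$ interprets $\mathit{init}_i=v$, $\mathit{decided}_i=v$, $\mathit{time}_i=k$ by reading $i$'s local state, and $i\in\mathcal N$ as true at $(r,m)$ iff $i\in\mathcal N(r)$. Abbreviations: $\mathit{jdecided}_i=v$ is $\mathit{decided}_i=v\wedge\ominus(\mathit{decided}_i=\bot)$; $\mathit{deciding}_i=v$ is $\mathit{decided}_i=\bot\wedge\bigcirc(\mathit{decided}_i=v)$. For an action protocol $P$, $\mathcal I_{\gamma,P}=(\mathcal R_{\mathcal E,\mathcal F,P},\pi)$. Knowledge-based programs. A knowledge-based program $\mathbf P=(\mathbf P_1,\ldots,\mathbf P_n)$ has each $\mathbf P_i$ generated by $\mathbf P_i::=a\mid\text{if }\varphi\text{ then }\mathbf P_i\text{ else }\mathbf P_i$ with $a\in A_i$ and each test $\varphi$ a Boolean combination of formulas $K_i\psi$ and propositions determined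 by $i$'s local state; its truth at a point depends only on $i$'s local state. Given $\mathcal I$ and a local state $s$ of $i$, $\mathbf P_i^{\mathcal I}(s)$ is the action obtained by evaluating the tests at $s$ in $\mathcal I$. An action protocol $P$ implements $\mathbf P$ in $\gamma$ if $P_i(s)=\mathbf P_i^{\mathcal I}(s)$ for every $i$ and every local state $s$ of $i$ arising in $\mathcal I=\mathcal I_{\gamma,P}$. The program $\mathbf P^0$: for each agent $i$, $\mathbf P^0_i$ is: if $\mathit{decided}_i\neq\bot$ then $\mathtt{noop}$; else if $\mathit{init}_i=0\vee K_i(\bigvee_{j\in\mathit{Agt}}\mathit{jdecided}_j=0)$ then $\mathtt{decide}_i(0)$; else if $K_i(\bigwedge_{j\in\mathit{Agt}}\neg(\mathit{deciding}_j=0))$ then $\mathtt{decide}_i(1)$; else $\mathtt{noop}$. Basic context. $\gamma_{\mathit{basic},n,t}=(\mathcal E_{\mathit{basic}}(n),SO(t),\pi_{\mathit{basic},n})$, where local states are $\langle\mathit{time}_i,\mathit{init}_i,\mathit{decided}_i,\mathit{rd}_i,\#1_i\rangle$ with $\#1_i\in\{0,\ldots,n\}$, initial states are $\langle0,\mathit{init}_i,\bot,\bot,0\rangle$, $M_i=\{0,1,(\mathit{init},1)\}$ ($M^0=\{0\},M^1=\{1\},M^2=\{(\mathit{init},1),\bot\}$), $\mu_{ij}(s,\mathtt{decide}_i(v))=v$, $\mu_{ij}(s,\mathtt{noop})=(\mathit{init},1)$ if $s$ has the form $\langle m,1,\bot,\bot,k\rangle$, and $\mu_{ij}(s,a)=\bot$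 otherwise; $\delta_i$ updates the first four components as in EBA contexts and sets $\#1_i$ to the number of $(\mathit{init},1)$ messages received in the current round if $\mathit{decided}_i=\bot$ and $i$ receives no message $0$ or $1$ in that round, and to $0$ otherwise; $\pi_{\mathit{basic},n}$ interprets $\mathit{time}_i=k$, $\mathit{init}_i=v$, $\mathit{decided}_i=v$, $\mathit{rd}_i=v$, $\#1_i=k$, $i\in\mathcal N$ in the obvious way. *)

From mathcomp Require Import all_boot.
Set Implicit Arguments. Unset Strict Implicit. Unset Printing Implicit Defensive.

(* Values 0/1 are encoded as bool: false = 0, true = 1.  [None] encodes bot. *)

Record lstate := LState {
  l_time : nat;
  l_init : bool;
  l_decided : option bool;
  l_rd : option bool;
  l_cnt : nat
}.

Inductive action := Decide of bool | Noop.

(** Messages M_i = {0, 1, (init,1)}; [option msg] with [None] = bot. *)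
Inductive msg := MVal of bool | MInit1.

Definition is_val (v : bool) (om : option msg) : bool :=
  match om with Some (MVal w) => w == v | _ => false end.
Definition is_init1 (om : option msg) : bool :=
  match om with Some MInit1 => true | _ => false end.

Definition init_state (v : bool) : lstate := LState 0 v None None 0.

(** mu_ij(s,a) (independent of the receiver j). *)
Definition mu (s : lstate) (a : action) : option msg :=
  match a with
  | Decide v => Some (MVal v)
  | Noop =>
      match s with
      | LState _ true None None _ => Some MInit1
      | _ => None
      end
  end.

Definition delta (n : nat) (s : lstate) (a : action)
    (recv : 'I_n -> option msg) : lstate :=
  let got0 := [exists j, is_val false (recv j)] in
  let got1 := [exists j, is_val true (recv j)] in
  LState (l_time s).+1
         (l_init s)
         (match a with Decide v => Some v | Noop => l_decided s end)
         (if got0 then Some false else if got1 then Some true else None)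
         (if (l_decided s == None) && ~~ got0 && ~~ got1
          then #|[pred j | is_init1 (recv j)]| else 0).

(** An initial global state: a failure pattern (N, F) plus initial preferences. *)
Record run (n : nat) := Run {
  r_nonfaulty : {set 'I_n};
  r_F : nat -> 'I_n -> 'I_n -> bool;   (* F m i j = false: message i -> j in round m+1 lost *)
  r_init : 'I_n -> bool
}.

Definition in_SO (n t : nat) (r : run n) : Prop :=
  #|~: r_nonfaulty r| <= t /\
  (forall m i j, r_F r m i j = false -> i \notin r_nonfaulty r).

Definition protocol (n : nat) := 'I_n -> lstate -> action.

Fixpoint gstate (n : nat) (P : protocol n) (r : run n) (m : nat) : 'I_n -> lstate :=
  match m with
  | 0 => fun i => init_state (r_init r i)
  | m'.+1 =>
      let g := gstate P r m' in
      fun i => @delta n (g i) (P i (g i))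
                 (fun j => if r_F r m' j i then mu (g j) (P j (g j)) else None)
  end.

Definition lst (n : nat) (P : protocol n) (r : run n) (m : nat) (i : 'I_n) : lstate :=
  gstate P r m i.

Definition pformula (n : nat) := run n -> nat -> Prop.

Definition Kst (n t : nat) (P : protocol n) (i : 'I_n) (s : lstate)
    (psi : pformula n) : Prop :=
  forall r' m', in_SO t r' -> lst P r' m' i = s -> psi r' m'.

Definition jdecided (n : nat) (P : protocol n) (j : 'I_n) (v : bool) : pformula n :=
  fun r m => l_decided (lst P r m j) = Some v /\
             (0 < m /\ l_decided (lst P r m.-1 j) = None).

Definition deciding (n : nat) (P : protocol n) (j : 'I_n) (v : bool) : pformula n :=
  fun r m => l_decided (lst P r m j) = None /\ l_decided (lst P r m.+1 j) = Some v.

(** The action prescribed by the knowledge-based program P^0_i at local state s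
    in I_{gamma,P} (the nested if-then-else, written relationally since its
    tests are propositions). *)
Definition P0_action (n t : nat) (P : protocol n) (i : 'I_n) (s : lstate)
    (a : action) : Prop :=
  let test0 := l_init s = false \/
               Kst t P i s (fun r m => exists j, jdecided P j false r m) in
  let test1 := Kst t P i s (fun r m => forall j, ~ deciding P j false r m) in
  (l_decided s <> None /\ a = Noop) \/
  (l_decided s = None /\ test0 /\ a = Decide false) \/
  (l_decided s = None /\ ~ test0 /\ test1 /\ a = Decide true) \/
  (l_decided s = None /\ ~ test0 /\ ~ test1 /\ a = Noop).

Definition implements_P0 (n t : nat) (P : protocol n) : Prop :=
  forall (i : 'I_n) (r : run n) (m : nat), in_SO t r ->
    P0_action t P i (lst P r m i) (P i (lst P r m i)).

(** The protocol P^basic.  "#1_i > n - time_i" (integer subtraction) is written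
    as #1_i + time_i > n to avoid truncated nat subtraction. *)
Definition Pbasic (n : nat) : protocol n :=
  fun i s =>
    if l_decided s != None then Noop
    else if (l_init s == false) || (l_rd s == Some false) then Decide false
    else if (n < l_cnt s + l_time s) || (l_rd s == Some true) then Decide true
    else Noop.
Arguments Pbasic n : clear implicits.
Arguments implements_P0 n t P : clear implicits.

From mathcomp Require Import all_boot zify.
Set Implicit Arguments. Unset Strict Implicit. Unset Printing Implicit Defensive.

(* Fix an undecided agent i at a point of a run in SO(t), with local state s.
   We show that the tests of P^0 evaluate as P^basic predicts:
   - P^basic decides 0 at s iff init_i = 0 or i knows that some agent has just
     decided 0 (test0_sound, test0_complete);
   - if P^basic decides 1 at s, i knows that nobody is deciding 0
     (test1_sound); if it performs noop, i does not know it (test1_complete).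
   The positive claims are agreement properties of all runs: a 0-decision in
   round m+1 is the end of a chain of 0-decisions that started at time 0, so
   at least m+1 agents have decided by then (deciding0_count), which rules out
   the condition #1_j > n - time_j under which j decides 1 in the same round
   (decide1_excludes_decide0).  The negative claims exhibit runs of SO(t) that
   i cannot tell apart from the actual one: in a "twin run" every agent
   prefers 1, the faulty agents only talk to i in the last round, and
   optionally a hidden chain of faulty agents hands a 0-decision from one to
   the next and finally to a nonfaulty agent.  Counting consequences of
   SO(t) (cnt_lower, silent_time_bound) make the twin runs admissible. *)

Section Dynamics.
Variables (n : nat) (P : protocol n) (r : run n).
Local Notation g := (gstate P r).

Definition recvd (m : nat) (i j : 'I_n) : option msg :=
  if r_F r m j i then mu (g m j) (P j (g m j)) else None.

Lemma time_gstate m i : l_time (g m i) = m.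
Proof. by elim: m i => [|m IH] i //=; rewrite IH. Qed.

Lemma init_gstate m i : l_init (g m i) = r_init r i.
Proof. by elim: m i => [|m IH] i //=; rewrite IH. Qed.

Lemma decided_S m i :
  l_decided (g m.+1 i) =
  if P i (g m i) is Decide v then Some v else l_decided (g m i).
Proof. by []. Qed.

Lemma undecided_before m m' i :
  m <= m' -> l_decided (g m' i) = None -> l_decided (g m i) = None.
Proof.
elim: m' => [|m' IH]; first by rewrite leqn0 => /eqP->.
rewrite leq_eqVlt ltnS => /orP[/eqP-> //|le_mm'].
by rewrite decided_S; case: (P i _) => // /IH; apply.
Qed.

Lemma decided_origin m i v :
  l_decided (g m i) = Some v -> exists2 a, a < m & P i (g a i) = Decide v.
Proof.
elim: m => [|m IH] //; rewrite decided_S.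
case Pm: (P i (g m i)) => [w|]; first by case=> <-; exists m.
by case/IH=> a lt_am Pa; exists a => //; rewrite ltnS ltnW.
Qed.

Lemma cnt_bound m i : l_cnt (g m i) <= n.
Proof.
case: m => [|m] //=; case: ifP => // _.
by rewrite -[X in _ <= X]card_ord max_card.
Qed.

Lemma recvd_valP m i j v :
  is_val v (recvd m i j) <-> r_F r m j i /\ P j (g m j) = Decide v.
Proof.
rewrite /recvd; case: (r_F r m j i); last by split=> // [[]].
case: (P j _) => [w|] /=; first by split=> [/eqP->|[_ [->]]].
by split=> [|[]] //; case: (g m j) => ? [] [?|] [?|].
Qed.

Lemma rd_S m i :
  l_rd (g m.+1 i) =
  if [exists j, is_val false (recvd m i j)] then Some false
  else if [exists j, is_val true (recvd m i j)] then Some true else None.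
Proof. by []. Qed.

Lemma rd_sender m i v :
  l_rd (g m.+1 i) = Some v -> exists j, P j (g m j) = Decide v.
Proof.
rewrite rd_S; case: existsP => [[j /recvd_valP[_ Pj]] [<-]|_]; first by exists j.
by case: existsP => [[j /recvd_valP[_ Pj]] [<-]|_] //; exists j.
Qed.

Lemma rd_silentP m i :
  l_rd (g m.+1 i) = None <->
  (forall j v, r_F r m j i -> P j (g m j) <> Decide v).
Proof.
rewrite rd_S; split.
  case: existsP => [//|no0]; case: existsP => [//|no1] _ j [] Fji Pj.
    by apply: no1; exists j; apply/recvd_valP.
  by apply: no0; exists j; apply/recvd_valP.
move=> silent; case: existsP => [[j /recvd_valP[Fji /silent]]|_] //.
by case: existsP => [[j /recvd_valP[Fji /silent]]|_].
Qed.

Lemma rd_receives0 m i j :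
  r_F r m j i -> P j (g m j) = Decide false -> l_rd (g m.+1 i) = Some false.
Proof.
move=> Fji Pj; rewrite rd_S; case: existsP => // no0.
by exfalso; apply: no0; exists j; apply/recvd_valP.
Qed.

Lemma cnt_S m i :
  l_decided (g m i) = None -> l_rd (g m.+1 i) = None ->
  l_cnt (g m.+1 i) = #|[pred j | is_init1 (recvd m i j)]|.
Proof.
move=> und; rewrite rd_S /=.
by case: [exists j, _]; case: [exists j, _]; rewrite // und.
Qed.

Definition decided_set (m : nat) : {set 'I_n} :=
  [set j | l_decided (g m j) != None].

Lemma decided_set_mono m m' : m <= m' -> decided_set m \subset decided_set m'.
Proof.
move=> le_mm'; apply/subsetP=> j; rewrite !inE.
by apply: contra_neq => /(undecided_before le_mm').
Qed.

(* An [(init,1)] message comes from an agent that performs [noop] while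
   undecided; so [#1_i] is at most the number of agents still undecided. *)
Lemma cnt_undecided m i :
  l_decided (g m i) = None -> l_rd (g m.+1 i) = None ->
  l_cnt (g m.+1 i) + #|decided_set m.+1| <= n.
Proof.
move=> und silent; rewrite cnt_S //.
have sub : [pred j | is_init1 (recvd m i j)] \subset ~: decided_set m.+1.
  apply/subsetP=> j; rewrite !inE /recvd decided_S negbK.
  case: (r_F r m j i) => //; case: (P j _) => [v|] //=.
  by case: (g m j) => ? [] [?|] [?|].
apply: leq_trans (leq_add (subset_leq_card sub) (leqnn _)) _.
by rewrite addnC cardsC card_ord.
Qed.

Lemma decidingP m j v :
  deciding P j v r m <-> l_decided (g m j) = None /\ P j (g m j) = Decide v.
Proof.
rewrite /deciding /lst decided_S; split=> -[und]; last by move=> ->.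
by rewrite und; case: (P j (g m j)) => [w [->]|].
Qed.

Lemma jdecided_S m j v : jdecided P j v r m.+1 <-> deciding P j v r m.
Proof. by rewrite /jdecided /deciding; split=> [[? [_ ?]]|[]]. Qed.

End Dynamics.

Section BasicProtocol.
Variables (n : nat) (i : 'I_n).

(* A quiet local state: initial preference 1, undecided, no decision heard,
   and too few [(init,1)] messages to decide 1.  These are exactly the
   undecided states in which [P^basic] performs [noop]. *)
Definition quiet (s : lstate) : Prop :=
  [/\ l_init s, l_decided s = None, l_rd s = None & l_cnt s + l_time s <= n].

Lemma Pbasic_decided s : l_decided s <> None -> Pbasic n i s = Noop.
Proof. by rewrite /Pbasic; case: (l_decided s). Qed.

Lemma Pbasic_undecided s v : Pbasic n i s = Decide v -> l_decided s = None.
Proof. by rewrite /Pbasic; case: (l_decided s). Qed.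

Lemma Pbasic_falseP s :
  l_decided s = None ->
  Pbasic n i s = Decide false <-> l_init s = false \/ l_rd s = Some false.
Proof.
rewrite /Pbasic => ->.
case: s => tm [] d [[]|] c /=; rewrite ?eqxx ?orbT ?orbF.
all: by case: (n < c + tm); split=> [|[]] //; auto.
Qed.

Lemma Pbasic_true s :
  Pbasic n i s = Decide true ->
  l_rd s <> Some false /\ (n < l_cnt s + l_time s \/ l_rd s = Some true).
Proof.
case: s => tm [] [d|] [[]|] c; rewrite /Pbasic //= ?orbF.
all: by case: (n < c + tm) => //= _; split; auto.
Qed.

Lemma silent_state s :
  l_init s -> l_decided s = None -> l_rd s = None ->
  s = LState (l_time s) true None None (l_cnt s).
Proof. by case: s => ? [] ? ? ? //= _ -> ->. Qed.

Lemma Pbasic_noopP s : l_decided s = None -> Pbasic n i s = Noop <-> quiet s.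
Proof.
rewrite /Pbasic /quiet => ->.
case: s => tm [] d [[]|] c /=; rewrite ?eqxx ?orbT ?orbF.
3: by case: ltnP => lt; split=> // [[_ _ _]]; lia.
all: by split=> // -[].
Qed.

Lemma quiet_noop s : quiet s -> Pbasic n i s = Noop.
Proof. by move=> q; apply/Pbasic_noopP => //; case: q. Qed.

Lemma quiet_mu s : quiet s -> mu s Noop = Some MInit1.
Proof. by case: s => ? [] [?|] [?|] ? []. Qed.

End BasicProtocol.

Section Safety.
Variables (n : nat) (r : run n).
Local Notation g := (gstate (Pbasic n) r).
Local Notation deciding0 k m := (deciding (Pbasic n) k false r m).

Lemma init0_decided i m :
  r_init r i = false -> 0 < m -> l_decided (g m i) <> None.
Proof.
move=> init0; case: m => // m _ /(undecided_before (isT : 0 < m.+1)).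
by rewrite decided_S /= init0.
Qed.

Lemma rd0_deciding m i :
  l_rd (g m.+1 i) = Some false -> exists p, deciding0 p m.
Proof.
case/rd_sender=> p Pp; exists p; apply/decidingP; split=> //.
exact: Pbasic_undecided Pp.
Qed.

Lemma deciding0_source m k : deciding0 k m.+1 -> exists p, deciding0 p m.
Proof.
case/decidingP=> und /(Pbasic_falseP _ und)[init0|]; last exact: rd0_deciding.
by rewrite init_gstate in init0; case: (init0_decided init0 (ltn0Sn m)).
Qed.

Lemma deciding0_count m k :
  deciding0 k m -> m.+1 <= #|decided_set (Pbasic n) r m.+1|.
Proof.
have decided_at j l : deciding0 j l -> j \in decided_set (Pbasic n) r l.+1.
  by case=> _; rewrite inE /lst => ->.
elim: m k => [|m IH] k dec_k.
  by apply/card_gt0P; exists k; apply: decided_at.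
have [p /IH count_p] := deciding0_source dec_k.
have k_new : k \notin decided_set (Pbasic n) r m.+1.
  by case: dec_k; rewrite inE /lst negbK => /eqP.
have sub :
    k |: decided_set (Pbasic n) r m.+1 \subset decided_set (Pbasic n) r m.+2.
  by rewrite subUset sub1set decided_at // decided_set_mono.
by apply: leq_trans (subset_leq_card sub); rewrite cardsU1 k_new.
Qed.

Lemma decide1_excludes_decide0 l j :
  Pbasic n j (g l j) = Decide true -> forall k, ~ deciding0 k l.
Proof.
elim: l j => [|l IH] j Pj k dec_k.
  by case: (Pbasic_true Pj) => _ []; rewrite /= ?ltn0.
have [p dec_p] := deciding0_source dec_k.
have [no_rd0 [many|rd1]] := Pbasic_true Pj; last first.
  by have [q Pq] := rd_sender rd1; apply: (IH q Pq p).
have und : l_decided (g l j) = None.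
  exact: undecided_before (leqnSn l) (Pbasic_undecided Pj).
case rd_j: (l_rd (g l.+1 j)) => [[]|] //.
  by have [q Pq] := rd_sender rd_j; apply: (IH q Pq p).
have := cnt_undecided und rd_j; have := deciding0_count dec_p.
by move: many; rewrite time_gstate; lia.
Qed.

End Safety.

Section Omissions.
Variables (n t : nat) (r : run n).
Hypothesis so : in_SO t r.
Local Notation g := (gstate (Pbasic n) r).

Lemma nonfaulty_delivers m x i : x \in r_nonfaulty r -> r_F r m x i.
Proof.
case: so => _ omit x_nf; case F: (r_F r m x i) => //.
by move: x_nf; rewrite (negbTE (omit _ _ _ F)).
Qed.

Lemma decision_spreads a x i v :
  x \in r_nonfaulty r -> Pbasic n x (g a x) = Decide v ->
  l_decided (g a.+2 i) <> None.
Proof.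
move=> x_nf Px; rewrite decided_S.
case Pi: (Pbasic n i _) => [w|] // und.
have [_ _ /rd_silentP silent _] := (Pbasic_noopP i und).1 Pi.
exact: silent x v (nonfaulty_delivers a i x_nf) Px.
Qed.

Lemma nonfaulty_sends_init1 m i x :
  l_decided (g m.+1 i) = None -> l_rd (g m.+1 i) = None ->
  x \in r_nonfaulty r -> recvd (Pbasic n) r m i x = Some MInit1.
Proof.
move=> und /rd_silentP silent x_nf; rewrite /recvd nonfaulty_delivers //.
have und_x : l_decided (g m x) = None.
  case dec_x: (l_decided (g m x)) => [v|] //.
  have [a lt_am Pa] := decided_origin dec_x.
  by case: (decision_spreads (i := i) x_nf Pa); apply: undecided_before und.
case Px: (Pbasic n x _) => [v|].
  by case: (silent x v (nonfaulty_delivers m i x_nf)).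
by apply: quiet_mu; apply/(Pbasic_noopP x und_x).
Qed.

Lemma cnt_lower m i :
  l_decided (g m.+1 i) = None -> l_rd (g m.+1 i) = None ->
  n - t <= l_cnt (g m.+1 i).
Proof.
move=> und silent; rewrite cnt_S //; last exact: undecided_before und.
have sub : r_nonfaulty r \subset [pred j | is_init1 (recvd (Pbasic n) r m i j)].
  by apply/subsetP=> x x_nf; rewrite inE /= nonfaulty_sends_init1.
apply: leq_trans (subset_leq_card sub).
have := cardsC (r_nonfaulty r); rewrite card_ord; case: so; lia.
Qed.

(* An agent can stay undecided without hearing a decision only up to time
   [t+1]: at time [m] it performs [noop] only if [#1_i + m <= n]. *)
Lemma silent_time_bound m i :
  l_decided (g m.+1 i) = None -> l_rd (g m.+1 i) = None -> m <= t.
Proof.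
case: m => // m und _.
have und' := undecided_before (leqnSn _) und.
have Pi : Pbasic n i (g m.+1 i) = Noop.
  by move: und; rewrite decided_S; case: (Pbasic n i _).
have [_ _ silent] := (Pbasic_noopP i und').1 Pi.
by rewrite time_gstate; have := cnt_lower und' silent; lia.
Qed.

End Omissions.

Section QuietRounds.
Variables (n : nat) (r : run n).
Local Notation g := (gstate (Pbasic n) r).

Lemma quiet_step l k :
  quiet n (g l k) -> (forall x, r_F r l x k -> quiet n (g l x)) ->
  [/\ l_decided (g l.+1 k) = None, l_rd (g l.+1 k) = None
    & l_cnt (g l.+1 k) = #|[pred x | r_F r l x k]|].
Proof.
move=> q_k q_senders.
have und : l_decided (g l.+1 k) = None by rewrite decided_S quiet_noop //; case: q_k.
have silent : l_rd (g l.+1 k) = None.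
  by apply/rd_silentP=> x v /q_senders /quiet_noop ->.
split=> //; rewrite cnt_S //; last by case: q_k.
apply: eq_card=> x; rewrite !inE /recvd.
case F: (r_F r l x k) => //; have q := q_senders x F.
by rewrite quiet_noop // (quiet_mu q).
Qed.

End QuietRounds.

(* An enumeration of the agents starting with [i]; [pos i j] is the position
   of [j] in it.  The indistinguishable runs below are described by positions. *)
Section AgentOrder.
Variables (n : nat) (i : 'I_n).

Definition agent_order : seq 'I_n := i :: rem i (enum 'I_n).
Definition pos (j : 'I_n) : nat := index j agent_order.
Definition agent_at (p : nat) : 'I_n := nth i agent_order p.

Lemma agent_order_perm : perm_eq (enum 'I_n) agent_order.
Proof. exact: perm_to_rem (mem_enum _ i). Qed.

Lemma agent_order_uniq : uniq agent_order.
Proof. by rewrite -(perm_uniq agent_order_perm) enum_uniq. Qed.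

Lemma size_agent_order : size agent_order = n.
Proof. by rewrite -(perm_size agent_order_perm) size_enum_ord. Qed.

Lemma pos_self : pos i = 0.
Proof. by rewrite /pos /= eqxx. Qed.

Lemma pos_agent_at p : p < n -> pos (agent_at p) = p.
Proof.
by move=> lt_pn; rewrite /pos index_uniq ?agent_order_uniq ?size_agent_order.
Qed.

Lemma card_pos_lt k : k <= n -> #|[pred j | pos j < k]| = k.
Proof.
move=> le_kn; have uniq_take := take_uniq k agent_order_uniq.
rewrite -[RHS](size_takel (_ : k <= size agent_order)) ?size_agent_order //.
rewrite -(card_uniqP uniq_take); apply: eq_card => j; rewrite inE /=.
by rewrite in_take_leq ?size_agent_order // -(perm_mem agent_order_perm) mem_enum.
Qed.

End AgentOrder.

(* The agents in positions [< n - t] are nonfaulty and talk to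
   everybody; the faulty ones in positions [< c] talk only to [i], and only in
   round [m+1].  All agents prefer 1, except, if [chain] holds, the agent in
   position [c]: it decides 0 at once and tells only the agent in position
   [c+1], which decides 0 and tells only position [c+2], and so on; in the
   last round the 0-decision is handed to the agent in position 1.  Agents
   off the chain stay quiet, so [i] cannot tell whether the chain exists. *)
Section TwinRun.
Variables (n t : nat) (i : 'I_n) (m c : nat) (chain : bool).
Hypotheses (n_large : t + 2 <= n) (c_lower : n - t <= c) (c_upper : c <= n)
  (m_upper : m <= t) (chain_fits : chain -> c + m < n).
Local Notation pos := (pos i).

(* Position of the agent that receives the chain's 0-decision in round [l+1]. *)
Definition target (l : nat) : nat := if l < m then c + l.+1 else 1.

Definition twin_F (l : nat) (x k : 'I_n) : bool :=
  [|| pos x < n - t, (l == m) && (k == i) && (pos x < c)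
    | [&& chain, pos x == c + l, l <= m & pos k == target l]].

Definition twin_run : run n :=
  Run [set j | pos j < n - t] twin_F (fun j => ~~ chain || (pos j != c)).

Local Notation g := (gstate (Pbasic n) twin_run).

(* Only the [t] agents in positions [>= n - t] omit messages. *)
Lemma twin_run_SO : in_SO t twin_run.
Proof.
split=> [|l x k]; last by rewrite /= inE /twin_F; case: (pos x < n - t).
have := cardsC [set j | pos j < n - t].
rewrite card_ord cardsE card_pos_lt ?leq_subr //; set faulty := #|~: _|; lia.
Qed.

Definition on_chain (l : nat) (j : 'I_n) : bool := chain && (c <= pos j <= c + l).

Definition twin_inv (l : nat) : Prop :=
  (forall j, ~~ on_chain l j -> quiet n (g l j)) /\
  (chain -> forall j, pos j = c + l -> Pbasic n j (g l j) = Decide false).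

Lemma twin_inv0 : twin_inv 0.
Proof.
split=> [j|ch j pos_j]; last by rewrite /= ch pos_j addn0 eqxx.
by rewrite /on_chain /quiet /=; case: chain => //=; split=> //; lia.
Qed.

(* Apart from the chain hand-over, all senders sit in positions [< c], hence
   off the chain. *)
Lemma twin_senders l x k :
  ~~ (chain && (pos k == target l)) -> twin_F l x k -> pos x < c.
Proof. by rewrite /twin_F; case: chain => /=; lia. Qed.

(* Before the last round an agent off the chain hears exactly the [n - t]
   nonfaulty agents, which keeps it quiet since [l+1 <= m <= t]. *)
Lemma twin_quiet_step l j :
  l < m -> twin_inv l -> ~~ on_chain l.+1 j -> quiet n (g l.+1 j).
Proof.
move=> lt_lm [inv_q _] off_j.
have not_target : ~~ (chain && (pos j == target l)).
  by move: off_j; rewrite /on_chain /target lt_lm; case: chain => /=; lia.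
have quiet_j : quiet n (g l j).
  by apply: inv_q; move: off_j; rewrite /on_chain; case: chain => /=; lia.
have quiet_senders x : twin_F l x j -> quiet n (g l x).
  move/(twin_senders not_target)=> lt_xc; apply: inv_q.
  by rewrite /on_chain; case: chain => /=; lia.
have [und silent cnt] := quiet_step quiet_j quiet_senders.
have senders : #|[pred x | twin_F l x j]| = n - t.
  rewrite -[RHS](@card_pos_lt n i) ?leq_subr //; apply: eq_card => x.
  by rewrite !inE /twin_F; move: not_target; case: chain => /=; lia.
split=> //; last by rewrite cnt senders time_gstate; lia.
by rewrite init_gstate /=; move: off_j; rewrite /on_chain; case: chain => /=; lia.
Qed.

(* The target of round [l+1] is quiet at time [l] and receives the 0-decision
   of the chain member in position [c + l], so it decides 0 next. *)
Lemma twin_chain_step l k :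
  l <= m -> twin_inv l -> chain -> pos k = target l ->
  deciding (Pbasic n) k false twin_run l.+1.
Proof.
move=> le_lm [inv_q inv_d] ch pos_k.
have lt_n : c + l < n by have := chain_fits ch; lia.
set x := agent_at i (c + l).
have pos_x : pos x = c + l by apply: pos_agent_at.
have F_xk : r_F twin_run l x k.
  by rewrite /= /twin_F ch pos_x eqxx le_lm pos_k eqxx !orbT.
have rd0 := rd_receives0 F_xk (inv_d ch x pos_x).
have quiet_k : quiet n (g l k).
  apply: inv_q; rewrite /on_chain ch pos_k /target.
  by case: ifP => _ /=; lia.
have und : l_decided (g l.+1 k) = None.
  by rewrite decided_S quiet_noop //; case: quiet_k.
by apply/decidingP; split=> //; apply/Pbasic_falseP => //; right.
Qed.

Lemma twin_inv_all l : l <= m -> twin_inv l.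
Proof.
elim: l => [|l IH] le_lm; first exact: twin_inv0.
have inv_l := IH (ltnW le_lm).
split=> [j|ch j pos_j]; first exact: twin_quiet_step.
have /decidingP[_ //] : deciding (Pbasic n) j false twin_run l.+1.
by apply: twin_chain_step; rewrite ?(ltnW le_lm) // /target le_lm pos_j addnS.
Qed.

(* In the last round [i] hears exactly the agents in positions [< c], so at
   time [m+1] it has local state <m+1, 1, bot, bot, c>. *)
Lemma twin_view : g m.+1 i = LState m.+1 true None None c.
Proof.
have [inv_q _] := twin_inv_all (leqnn m).
have off_i : ~~ on_chain m i by rewrite /on_chain pos_self; case: chain => /=; lia.
have not_target : ~~ (chain && (pos i == target m)).
  by rewrite pos_self /target ltnn andbF.
have quiet_senders x : twin_F m x i -> quiet n (g m x).
  move/(twin_senders not_target)=> lt_xc; apply: inv_q.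
  by rewrite /on_chain; case: chain => /=; lia.
have [und silent cnt] := quiet_step (inv_q i off_i) quiet_senders.
have senders : #|[pred x | twin_F m x i]| = c.
  rewrite -[RHS](@card_pos_lt n i) //; apply: eq_card => x.
  by rewrite !inE /twin_F !eqxx pos_self /target ltnn !andbF orbF /=; lia.
have init_i : l_init (g m.+1 i).
  by rewrite init_gstate /= pos_self; case: chain => /=; lia.
by rewrite (silent_state init_i und silent) time_gstate cnt senders.
Qed.

Lemma twin_no_decision :
  ~~ chain -> forall j, ~ jdecided (Pbasic n) j false twin_run m.+1.
Proof.
move=> no_chain j /jdecided_S /decidingP[_].
have [inv_q _] := twin_inv_all (leqnn m).
by rewrite quiet_noop //; apply: inv_q; rewrite /on_chain (negbTE no_chain).
Qed.

Lemma twin_hidden_decision :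
  chain -> deciding (Pbasic n) (agent_at i 1) false twin_run m.+1.
Proof.
move=> ch; apply: twin_chain_step => //; first exact: twin_inv_all.
by rewrite /target ltnn pos_agent_at //; lia.
Qed.

End TwinRun.

Definition lone_zero_run n (i : 'I_n) : run n :=
  Run setT (fun _ _ _ => true) (fun j => j != agent_at i 1).

Section Knowledge.
Variables (n t : nat) (i : 'I_n).
Hypothesis n_large : t + 2 <= n.
Local Notation g r := (gstate (Pbasic n) r).
Local Notation K := (Kst t (Pbasic n) i).
Local Notation someone_jdecided0 :=
  (fun r m => exists j, jdecided (Pbasic n) j false r m).
Local Notation nobody_deciding0 :=
  (fun r m => forall j, ~ deciding (Pbasic n) j false r m).

Lemma twin_indistinguishable r m (chain : bool) :
  in_SO t r -> l_init (g r m.+1 i) -> l_decided (g r m.+1 i) = None ->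
  l_rd (g r m.+1 i) = None -> chain ==> (l_cnt (g r m.+1 i) + m < n) ->
  let r' := twin_run t i m (l_cnt (g r m.+1 i)) chain in
  [/\ in_SO t r', lst (Pbasic n) r' m.+1 i = lst (Pbasic n) r m.+1 i,
      ~~ chain -> forall j, ~ jdecided (Pbasic n) j false r' m.+1
    & chain -> deciding (Pbasic n) (agent_at i 1) false r' m.+1].
Proof.
move=> so init1 und silent /implyP fits r'; rewrite {}/r'.
have c_lower := cnt_lower so und silent.
have c_upper := cnt_bound (Pbasic n) r m.+1 i.
have m_upper := silent_time_bound so und silent.
split; first exact: twin_run_SO.
- by rewrite /lst twin_view // [RHS]silent_state // time_gstate.
- exact: twin_no_decision.
- exact: twin_hidden_decision.
Qed.

(* The test [init_i = 0 \/ K_i (some agent just decided 0)] holds where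
   [P^basic] decides 0 ... *)
Lemma test0_sound s :
  Pbasic n i s = Decide false -> l_init s = false \/ K s someone_jdecided0.
Proof.
move=> Pi; case/(Pbasic_falseP _ (Pbasic_undecided Pi)): Pi => [->|rd0].
  by left.
right=> r [|m] _ state; first by move: rd0; rewrite -state.
by move: rd0; rewrite -state => /rd0_deciding[p /jdecided_S]; exists p.
Qed.

Lemma test1_sound s : Pbasic n i s = Decide true -> K s nobody_deciding0.
Proof.
by move=> Pi r m _ state; rewrite -state in Pi; apply: decide1_excludes_decide0 Pi.
Qed.

(* ... and fails at every other undecided reachable state: after hearing a
   1-decision this is agreement, and otherwise the twin run without a chain
   is indistinguishable for [i]. *)
Lemma test0_complete r m :
  in_SO t r -> let s := lst (Pbasic n) r m i in
  l_decided s = None -> Pbasic n i s <> Decide false ->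
  ~ (l_init s = false \/ K s someone_jdecided0).
Proof.
move=> so s und not0 [init0|K0]; first by apply/not0/Pbasic_falseP; auto.
have [j jdec] := K0 r m so erefl.
case: m => [|m] in s und not0 K0 jdec *; first by case: jdec => _ [].
case rd: (l_rd s) => [[]|].
- have [q Pq] := rd_sender rd.
  have dec_j : deciding (Pbasic n) j false r m by apply/jdecided_S.
  exact: decide1_excludes_decide0 Pq j dec_j.
- by apply/not0/Pbasic_falseP; auto.
have init1 : l_init s.
  by case init: (l_init s) => //; case: not0; apply/Pbasic_falseP => //; left.
have [so' same hidden _] :=
  @twin_indistinguishable r m false so init1 und rd isT.
by have [j'] := K0 _ _ so' same; apply: hidden.
Qed.

(* Where [P^basic] performs [noop], [i] does not know it: at time 0 some
   other agent may prefer 0, and later a hidden chain may exist. *)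
Lemma test1_complete r m :
  in_SO t r -> let s := lst (Pbasic n) r m i in
  l_decided s = None -> Pbasic n i s = Noop -> ~ K s nobody_deciding0.
Proof.
move=> so s und /(Pbasic_noopP _ und)[init1 _ silent within] K1.
have one_lt_n : 1 < n by lia.
case: m => [|m] in s und init1 silent within K1 *.
  apply: (K1 (lone_zero_run i) 0 _ _ (agent_at i 1)).
  - by split=> //=; rewrite setCT cards0.
  - have init_i : r_init r i by rewrite -(init_gstate (Pbasic n) r 0).
    rewrite /s /lst /= init_i; congr init_state; apply/eqP => same_i.
    by have := pos_agent_at i one_lt_n; rewrite -same_i pos_self.
  - by apply/decidingP; rewrite /= eqxx.
have fits : l_cnt s + m < n by move: within; rewrite time_gstate; lia.
have [so' same _ dec] :=
  @twin_indistinguishable r m true so init1 und silent fits.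
exact: K1 _ _ so' same _ (dec isT).
Qed.

End Knowledge.

(* If [i] has decided, both programs perform [noop]; otherwise the four test
   lemmas say that [P^0] selects the action of [P^basic]. *)
Theorem mainTheorem5 (n t : nat) :
  t + 2 <= n -> implements_P0 n t (Pbasic n).
Proof.
move=> n_large i r m so; rewrite /P0_action.
set s := lst (Pbasic n) r m i.
case dec: (l_decided s) => [v|].
  by left; split=> //; apply: Pbasic_decided; rewrite dec.
right; case act: (Pbasic n i s) => [[]|].
- right; left; do !split=> //; last exact: test1_sound.
  by apply: (test0_complete n_large so dec); rewrite act.
- by left; do !split=> //; apply: test0_sound.
- right; right; do !split=> //.
    by apply: (test0_complete n_large so dec); rewrite act.
  exact: (test1_complete n_large so dec act).
Qed.
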